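(* Let $G$, $\widehat{D}$, $\mathcal{C}$, $\mathbf{H}_d$ and $D$ be as in the context. If $\widehat{D}$ is a chainable distance function, then the EC-distance $D:G\to\mathbb{R}_+$ has minima only on the curve $\mathcal{C}$ (i.e., no point $\mathbf{B}\notin\mathcal{C}$ is a local minimum of $D$). Furthermore, all these minima are global.
   Context: $G$ is a connected matrix Lie group of $n\times n$ real matrices of dimension $m$, with Lie algebra $\mathfrak{g}$, basis $\mathbf{E}_1,\dots,\mathbf{E}_m$, and $S(\boldsymbol{\zeta})=\sum_k\zeta_k\mathbf{E}_k$. For $f:G\to\mathbb{R}$, $\mathrm{L}[f](\mathbf{G})$ is the row vector with $j$-th entry $\lim_{\epsilon\to0}\frac1\epsilon(f(\exp(S(\mathbf{e}_j)\epsilon)\mathbf{G})-f(\mathbf{G}))$; partial versions $\mathrm{L}_{\mathbf{V}},\mathrm{L}_{\mathbf{W}}$ are defined for two-argument functions; differentiability at a point means these limits exist and are continuous there. An EE-distance function is $\widehat{D}:G\times G\to\mathbb{R}_+$ with: (a) $\widehat{D}(\mathbf{V},\mathbf{W})\ge0$, $=0$ iff $\mathbf{V}=\mathbf{W}$; (b) differentiable in both arguments almost everywhere, with some $D_{\min,\mathcal{C}}>0$ such that the derivatives exist whenever $0<\widehat{D}<D_{\min,\mathcal{C}}$, and where a partial $\mathrm{L}$-derivative does not exist all its directional limits exist and are bounded. A path generating function is $\Phi:[0,1]\times G\times G\to G$, differentiable in $\sigma$, with $\Phi(0,\mathbf{V},\mathbf{W})=\mathbf{V}$, $\Phi(1,\mathbf{V},\mathbf{W})=\mathbf{W}$.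 $\widehat{D}$ is chainable if it is an EE-distance and there exists a path generating function $\Phi$ with $\widehat{D}(\mathbf{V},\mathbf{W})=\widehat{D}(\mathbf{V},\Phi(\sigma,\mathbf{V},\mathbf{W}))+\widehat{D}(\Phi(\sigma,\mathbf{V},\mathbf{W}),\mathbf{W})$ for all $\mathbf{V},\mathbf{W}\in G$, $\sigma\in[0,1]$. $\mathcal{C}$ is the image of a differentiable map $\mathbf{H}_d:[0,1]\to G$ without self-intersections, and the EC-distance is $D(\mathbf{H})\triangleq\min_{s\in[0,1]}\widehat{D}(\mathbf{H},\mathbf{H}_d(s))$. *)

From HB Require Import structures.
From mathcomp Require Import all_boot all_order all_algebra.
From mathcomp Require Import all_classical all_reals all_analysis.
Set Implicit Arguments. Unset Strict Implicit. Unset Printing Implicit Defensive.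
Import Order.TTheory GRing.Theory Num.Theory.
Import numFieldNormedType.Exports.
Local Open Scope classical_set_scope.
Local Open Scope ring_scope.

Section Defs.
Variables (R : realType) (n m : nat).
(* matrices of size n.+1 x n.+1 (i.e. the paper's n >= 1) *)
Local Notation M := 'M[R]_n.+1.

Definition expmx (A : M) : M :=
  lim ((fun N : nat => \sum_(0 <= k < N) (k`!%:R)^-1 *: A ^+ k) @ \oo).

Definition matrix_lie_group (G : set M) : Prop :=
  [/\ (forall A, G A -> A \in unitmx),
      G 1%:M,
      (forall A B, G A -> G B -> G (A *m B)),
      (forall A, G A -> G (invmx A)) &
      (forall A, A \in unitmx -> closure G A -> G A)].

Definition lie_algebra (G : set M) : set M :=
  [set X | forall t : R, G (expmx (t *: X))].

Definition lie_basis (G : set M) (E : 'I_m -> M) : Prop :=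
  (forall c : 'I_m -> R, \sum_(i < m) c i *: E i = 0 -> forall i, c i = 0) /\
  lie_algebra G = range (fun c : 'I_m -> R => \sum_(i < m) c i *: E i).

Definition Smap (E : 'I_m -> M) (z : 'rV[R]_m) : M :=
  \sum_(k < m) z ord0 k *: E k.

Definition dq (E : 'I_m -> M) (f : M -> R) (A : M) (z : 'rV[R]_m) (eps : R) : R :=
  eps^-1 * (f (expmx (eps *: Smap E z) *m A) - f A).

Definition ej (j : 'I_m) : 'rV[R]_m := delta_mx ord0 j.

Definition L_exists (E : 'I_m -> M) (f : M -> R) (A : M) : Prop :=
  forall j, cvg (dq E f A (ej j) @ 0^').

Definition Lder (E : 'I_m -> M) (f : M -> R) (A : M) (j : 'I_m) : R :=
  lim (dq E f A (ej j) @ 0^').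

Definition L_diff_at (G : set M) (E : 'I_m -> M) (f : M -> R) (A : M) : Prop :=
  (\forall B \near A, G B -> L_exists E f B) /\
  forall j, (fun B => Lder E f B j) @ within G (nbhs A) --> Lder E f A j.

Definition dir_limits_bounded (E : 'I_m -> M) (f : M -> R) (A : M) : Prop :=
  exists K : R, forall z : 'rV[R]_m, `|z| <= 1 ->
    exists l : R, dq E f A z @ 0^'+ --> l /\ `|l| <= K.

Definition EE_distance (G : set M) (E : 'I_m -> M) (Dh : M -> M -> R) : Prop :=
  [/\ (forall V W, G V -> G W -> 0 <= Dh V W /\ (Dh V W = 0 <-> V = W)),
      (exists Dmin : R, 0 < Dmin /\
        forall V W, G V -> G W -> 0 < Dh V W < Dmin ->
          L_diff_at G E (fun X => Dh X W) V /\ L_diff_at G E (fun X => Dh V X) W) &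
      (forall V W, G V -> G W ->
          (~ L_diff_at G E (fun X => Dh X W) V -> dir_limits_bounded E (fun X => Dh X W) V) /\
          (~ L_diff_at G E (fun X => Dh V X) W -> dir_limits_bounded E (fun X => Dh V X) W))].

Definition diff01 (f : R -> M) : Prop :=
  [/\ (forall s, 0 < s < 1 -> derivable f s 1),
      cvg ((fun h => h^-1 *: (f h - f 0)) @ 0^'+) &
      cvg ((fun h => h^-1 *: (f (1 + h) - f 1)) @ 0^'-)].

Definition path_generating (G : set M) (Phi : R -> M -> M -> M) : Prop :=
  forall V W, G V -> G W ->
    [/\ (forall s, 0 <= s <= 1 -> G (Phi s V W)),
        diff01 (fun s => Phi s V W),
        Phi 0 V W = V &
        Phi 1 V W = W].

Definition chainable (G : set M) (E : 'I_m -> M) (Dh : M -> M -> R) : Prop :=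
  EE_distance G E Dh /\
  exists Phi, path_generating G Phi /\
    forall V W s, G V -> G W -> 0 <= s <= 1 ->
      Dh V W = Dh V (Phi s V W) + Dh (Phi s V W) W.

Definition curve (Hd : R -> M) : set M := Hd @` [set s : R | 0 <= s <= 1].

(* EC-distance D(H) = min_{s in [0,1]} Dh(H, H_d(s)) (taken as an infimum;
   attainment is a separate hypothesis) *)
Definition EC_distance (Dh : M -> M -> R) (Hd : R -> M) (H : M) : R :=
  inf [set Dh H (Hd s) | s in [set s : R | 0 <= s <= 1]].

Definition local_min_on (G : set M) (f : M -> R) (B : M) : Prop :=
  G B /\ \forall A \near B, G A -> f B <= f A.

End Defs.

From HB Require Import structures.
From mathcomp Require Import all_boot all_order all_algebra.
From mathcomp Require Import all_classical all_reals all_analysis.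
From mathcomp Require Import lra.
Set Implicit Arguments. Unset Strict Implicit. Unset Printing Implicit Defensive.
Import Order.TTheory GRing.Theory Num.Theory.
Import numFieldNormedType.Exports.
Local Open Scope classical_set_scope.
Local Open Scope ring_scope.

(* Let B be off the curve and W = H_d(s) a nearest point of the curve, so that
   D(B) = D^(B, W).  By chainability every point P = Phi(c, B, W) <> B of the
   path from B to W satisfies D(P) <= D^(P, W) = D^(B, W) - D^(B, P) < D(B), and
   continuity of the path provides such points arbitrarily close to B.  On the
   curve D vanishes, so minima there are global. *)

Section real_paths.
Variables (R : realType) (V : normedModType R).

Lemma cvg0_of_cvg_diffquot (F : set_system R) (FF : Filter F) (g : R -> V) :
  (fun h : R => h) @ F --> (0 : R) -> (\forall h \near F, h != 0) ->
  cvg ((fun h => h^-1 *: g h) @ F) -> g @ F --> 0.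
Proof.
move=> h0 hn0 /cvg_ex [l gl].
rewrite -(scale0r l).
apply: (@cvg_trans _ ((fun h => h *: (h^-1 *: g h)) @ F)); last exact: cvgZ.
apply: near_eq_cvg; near=> h; rewrite scalerA mulfV ?scale1r //.
by near: h.
Unshelve. all: by end_near. Qed.

Lemma cvg_at_right_of_diffquot (f : R -> V) (a : R) :
  cvg ((fun h => h^-1 *: (f (a + h) - f a)) @ 0^'+) -> f @ a^'+ --> f a.
Proof.
move=> fa_diff.
have : (fun h => f (a + h) - f a) @ 0^'+ --> 0.
  apply: (@cvg0_of_cvg_diffquot 0^'+ _ (fun h => f (a + h) - f a)
    (cvg_at_right_filter cvg_id) _ fa_diff).
  near=> h; apply: lt0r_neq0.
  by near: h; exact: nbhs_right_gt.
move=> /cvgrPdist_lt fa0; apply/cvgrPdist_lt => e e0.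
apply/nbhs_right0P; apply: filterS (fa0 e e0) => h.
by rewrite sub0r normrN distrC.
Unshelve. all: by end_near. Qed.

Lemma cvg_at_left_of_diffquot (f : R -> V) (a : R) :
  cvg ((fun h => h^-1 *: (f (a + h) - f a)) @ 0^'-) -> f @ a^'- --> f a.
Proof.
move=> fa_diff.
have : (fun h => f (a + h) - f a) @ 0^'- --> 0.
  apply: (@cvg0_of_cvg_diffquot 0^'- _ (fun h => f (a + h) - f a)
    (cvg_at_left_filter cvg_id) _ fa_diff).
  near=> h; apply: ltr0_neq0.
  by near: h; exact: nbhs_left_lt.
move=> /cvgrPdist_lt fa0; apply/cvgrPdist_lt => e e0.
apply/nbhs_left0P; move: (fa0 e e0) => /nbhs_left0P; apply: filterS => h.
by rewrite sub0r normrN distrC add0r.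
Unshelve. all: by end_near. Qed.

Lemma continuous_path_near_start (g : R -> V) (e : R) :
  {within `[0, 1], continuous g} -> 0 < e -> g 1 != g 0 ->
  exists2 c, 0 <= c <= 1 & g c != g 0 /\ ball (g 0) e (g c).
Proof.
move=> gc e0 g10.
pose f x := `|g x - g 0|.
have fc : {within `[0, 1], continuous f}.
  by move=> x; apply: cvg_norm; apply: cvgB; [exact: gc | exact: cvg_cst].
have f0 : f 0 = 0 by rewrite /f subrr normr0.
have f1 : 0 < f 1 by rewrite /f normr_gt0 subr_eq0.
pose v := Num.min e (f 1) / 2.
have v0 : 0 < v by rewrite divr_gt0 // lt_min e0 f1.
have [ve vf] : v < e /\ v <= f 1.
  have me : Num.min e (f 1) <= e by rewrite ge_min lexx.
  have mf : Num.min e (f 1) <= f 1 by rewrite ge_min lexx orbT.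
  by rewrite /v; split; lra.
have fv : Num.min (f 0) (f 1) <= v <= Num.max (f 0) (f 1).
  by rewrite f0 /Num.min /Num.max f1 /= vf (ltW v0).
have [c c01 fcv] := IVT ler01 fc fv.
exists c; first by move: c01; rewrite in_itv.
split; first by rewrite -subr_eq0 -normr_gt0 -/(f c) fcv.
by rewrite -ball_normE /ball_ /= distrC -/(f c) fcv.
Qed.

End real_paths.

Lemma diff01_continuous (R : realType) (n : nat) (f : R -> 'M[R]_n.+1) :
  diff01 f -> {within `[0, 1], continuous f}.
Proof.
move=> [fd fr fl]; apply: derivable_oo_LRcontinuous_within; split.
- by move=> x; rewrite in_itv /=; exact: fd.
- apply: cvg_at_right_of_diffquot.
  by under eq_fun do rewrite add0r.
- exact: cvg_at_left_of_diffquot.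
Qed.

Section EC_distance.
Variables (R : realType) (n : nat) (G : set 'M[R]_n.+1).
Variables (Dh : 'M[R]_n.+1 -> 'M[R]_n.+1 -> R) (Hd : R -> 'M[R]_n.+1).
Hypothesis HdG : forall s, 0 <= s <= 1 -> G (Hd s).
Hypothesis Dh_ge0 : forall V W, G V -> G W -> 0 <= Dh V W.

Lemma EC_distance_ge0 A : G A -> 0 <= EC_distance Dh Hd A.
Proof.
move=> GA; apply: lb_le_inf.
  by exists (Dh A (Hd 0)), 0; rewrite //= lexx ler01.
by move=> _ [s s01 <-]; exact/Dh_ge0/HdG.
Qed.

Lemma EC_distance_le A s :
  G A -> 0 <= s <= 1 -> EC_distance Dh Hd A <= Dh A (Hd s).
Proof.
move=> GA s01; apply: ge_inf; last by exists s.
by exists 0 => _ [t t01 <-]; exact/Dh_ge0/HdG.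
Qed.

Lemma EC_distance_attained A s :
  G A -> 0 <= s <= 1 ->
  (forall t, 0 <= t <= 1 -> Dh A (Hd s) <= Dh A (Hd t)) ->
  EC_distance Dh Hd A = Dh A (Hd s).
Proof.
move=> GA s01 smin; apply/eqP; rewrite eq_le EC_distance_le //=.
apply: lb_le_inf; first by exists (Dh A (Hd s)), s.
by move=> _ [t t01 <-]; exact: smin.
Qed.

Lemma EC_distance_chain_lt B P s :
  G P -> 0 <= s <= 1 -> EC_distance Dh Hd B = Dh B (Hd s) ->
  Dh B (Hd s) = Dh B P + Dh P (Hd s) -> 0 < Dh B P ->
  EC_distance Dh Hd P < EC_distance Dh Hd B.
Proof.
move=> GP s01 DB chain BP; have := EC_distance_le GP s01.
by rewrite DB chain; lra.
Qed.

End EC_distance.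

Theorem proposition2 (R : realType) (n m : nat)
  (G : set 'M[R]_n.+1) (E : 'I_m -> 'M[R]_n.+1)
  (Dh : 'M[R]_n.+1 -> 'M[R]_n.+1 -> R) (Hd : R -> 'M[R]_n.+1) :
  matrix_lie_group G -> connected G -> lie_basis G E ->
  diff01 Hd ->
  (forall s, 0 <= s <= 1 -> G (Hd s)) ->
  (forall s t, 0 <= s <= 1 -> 0 <= t <= 1 -> Hd s = Hd t -> s = t) ->
  (forall H, G H -> exists2 s, 0 <= s <= 1 &
       forall t, 0 <= t <= 1 -> Dh H (Hd s) <= Dh H (Hd t)) ->
  chainable G E Dh ->
  forall B, local_min_on G (EC_distance Dh Hd) B ->
    curve Hd B /\
    (forall A, G A -> EC_distance Dh Hd B <= EC_distance Dh Hd A).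
Proof.
move=> _ _ _ _ HdG _ Hmin [[Dh_pos _ _] [Phi [Phi_path chain]]] B [GB Bmin].
have Dh_ge0 V W : G V -> G W -> 0 <= Dh V W.
  by move=> GV GW; case: (Dh_pos V W).
have Dh_eq0 V W : G V -> G W -> (Dh V W = 0 <-> V = W).
  by move=> GV GW; case: (Dh_pos V W).
suff [s s01 BHs] : curve Hd B.
  split; first by exists s.
  move=> A GA; apply: le_trans _ (EC_distance_ge0 HdG Dh_ge0 GA).
  have := EC_distance_le HdG Dh_ge0 GB s01.
  by rewrite BHs (proj2 (Dh_eq0 _ _ GB GB) erefl).
apply: contrapT => Boff; have [s s01 smin] := Hmin B GB.
have GW := HdG s s01.
have [PhiG /diff01_continuous Phic Phi0 Phi1] := Phi_path B (Hd s) GB GW.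
have WB : Phi 1 B (Hd s) != Phi 0 B (Hd s).
  by rewrite Phi0 Phi1; apply/eqP => BHs; apply: Boff; exists s.
have /nbhs_ballP[e /= e0 eBmin] := Bmin.
have [c c01 []] := continuous_path_near_start Phic e0 WB.
have GP := PhiG c c01.
rewrite Phi0 => PcB /eBmin /(_ GP); apply/negP; rewrite -ltNge.
apply: (EC_distance_chain_lt HdG Dh_ge0 GP s01).
- exact: (EC_distance_attained HdG Dh_ge0 GB s01 smin).
- exact: chain.
- rewrite lt_def Dh_ge0 // andbT; apply/eqP => /(Dh_eq0 _ _ GB GP) BP.
  by rewrite -BP eqxx in PcB.
Qed.
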